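(* For every positive integer $n$, $$\Psi_n(0)=\begin{cases}0&\text{if } n=2;\\ p&\text{if } n=2p^\alpha \text{ for some prime } p \text{ and some positive integer } \alpha;\\ 1&\text{otherwise}.\end{cases}$$
   Context: The Fibonacci polynomials are defined by $F_1(x)=1$, $F_2(x)=x$, and $F_n(x)=xF_{n-1}(x)+F_{n-2}(x)$ for $n\geq 3$. For $n\geq 2$, the $n$-th fibotomic polynomial $\Psi_n(x)\in\mathbb{Z}[x]$ is the product of the monic irreducible factors of $F_n(x)$ which are not factors of $F_k(x)$ for any $k<n$; also $\Psi_1(x)=1$. Thus $F_n(x)=\prod_{d\mid n}\Psi_d(x)$ for all $n\geq1$. *)

From HB Require Import structures.
From mathcomp Require Import all_boot all_order all_algebra.
Set Implicit Arguments. Unset Strict Implicit. Unset Printing Implicit Defensive.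
Import Order.TTheory GRing.Theory Num.Theory.
Local Open Scope ring_scope.

Fixpoint fib_poly (n : nat) : {poly int} :=
  match n with
  | 0%N => 0
  | 1%N => 1
  | (m.+1 as k).+1 => 'X * fib_poly k + fib_poly m
  end.

Definition new_factor (n : nat) (q : {poly int}) : Prop :=
  [/\ q \is monic, irreducible_poly q, q %| fib_poly n
    & forall k : nat, (1 <= k < n)%N -> ~~ (q %| fib_poly k)].

(* s is an enumeration (without repetition) of the monic irreducible factors
   of F_n that are not factors of any F_k, k < n; Psi_n = \prod_(q <- s) q. *)
Definition fibotomic_factors (n : nat) (s : seq {poly int}) : Prop :=
  uniq s /\ (forall q : {poly int}, q \in s <-> new_factor n q).

From HB Require Import structures.
From mathcomp Require Import all_boot all_order all_algebra.
From mathcomp Require Import ring zify.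
From Stdlib Require Import Classical_Prop.
Set Implicit Arguments. Unset Strict Implicit. Unset Printing Implicit Defensive.
Import Order.TTheory GRing.Theory Num.Theory.
Local Open Scope ring_scope.

(* Psi_n(0) is computed from the factorization F_n = \prod_(d | n) Psi_d.

   The polynomial part realizes Psi_n concretely: fibotomic n is the monic
   associate of the largest divisor of F_n coprime to F_1 ... F_(n-1) (gdcop).
   Strong divisibility gcd(F_a, F_b) ~ F_(gcd(a, b)), which follows from the
   addition formula, and squarefreeness of F_n, which follows from the
   differential identity (X^2 + 4) F_n' + X F_n = n (F_(n+1) + F_(n-1)), give
   F_n = \prod_(d | n) fibotomic d; squarefreeness also shows that any
   enumeration s of the new irreducible factors of F_n multiplies to
   fibotomic n.

   The arithmetic part evaluates at 0. Since F_(2m+1)(0) = 1, F_(2m) = X h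
   with h(0) = m, and Psi_2 = X, the products \prod_(d | n, d <> 2) Psi_d(0)
   are 1 or n/2; the function d |-> [d odd] + [d even] Lambda(d/2) (Lambda the
   exponential von Mangoldt function) has the same divisor products because
   \prod_(e | m) Lambda(e) = m, and divisor products determine a function. *)

Definition squarefree_poly (R : idomainType) (p : {poly R}) : Prop :=
  forall r : {poly R}, r * r %| p -> size r == 1%N.

Lemma squarefree_dvdp (R : idomainType) (p q : {poly R}) :
  squarefree_poly p -> q %| p -> squarefree_poly q.
Proof. by move=> sq_p qp r /dvdp_trans /(_ qp); exact: sq_p. Qed.

Lemma monic_size1 (R : idomainType) (p : {poly R}) :
  p \is monic -> size p == 1%N -> p = 1.
Proof. by move=> p_monic; rewrite size_poly_eq1 eqp_monic ?monic1 // => /eqP. Qed.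

Lemma dvdp_deriv_of_sq (R : idomainType) (r p : {poly R}) : r * r %| p -> r %| p^`().
Proof.
case/Pdiv.Idomain.dvdpP => -[c q] /= c_neq0 cp.
suff : r %| (c *: p)^`() by rewrite derivZ dvdpZr.
rewrite cp !derivE.
apply: dvdp_add; first exact/dvdp_mull/dvdp_mulIl.
by apply/dvdp_mull/dvdp_add; [exact: dvdp_mulIr | exact: dvdp_mulIl].
Qed.

Lemma dvdp_mulrn (R : numDomainType) (d p : {poly R}) k : (0 < k)%N -> (d %| p *+ k) = (d %| p).
Proof. by move=> k_gt0; rewrite -scaler_nat dvdpZr // pnatr_eq0 -lt0n. Qed.

Definition monic_assoc (p : {poly int}) : {poly int} :=
  lead_coef (zprimitive p) *: zprimitive p.

Lemma monic_assoc_spec p m :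
  m \is monic -> p %| m -> monic_assoc p \is monic /\ monic_assoc p %= p.
Proof.
move=> m_monic /dvdpP_int [r mE].
have unit_lead : lead_coef (zprimitive p) * lead_coef r = 1.
  by rewrite -lead_coefM -mE; apply/monicP.
have lead_neq0 : lead_coef (zprimitive p) != 0.
  by apply: contra_eq_neq unit_lead => ->; rewrite mul0r.
split.
  apply/monicP; rewrite lead_coefZ.
  move: unit_lead; rewrite mulrC => /intUnitRing.unitzPl.
  by rewrite qualifE => /pred2P[] ->.
apply: eqp_trans (eqp_scale _ lead_neq0) _; rewrite {2}[p]zpolyEprim eqp_sym.
apply: eqp_scale; rewrite zcontents_eq0; apply: contra_eq_neq unit_lead => p0.
by rewrite p0 zprimitive0 lead_coef0 mul0r.
Qed.

Lemma monic_dvdp_squarefree_eq (P M : {poly int}) :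
  P \is monic -> M \is monic -> squarefree_poly M -> P %| M ->
  (forall g, g %| M -> size g != 1%N -> ~~ coprimep g P) -> P = M.
Proof.
move=> P_monic M_monic sqM /dvdpP_int [g]; rewrite zprimitive_monic // => ME coP.
have g_monic : g \is monic.
  by apply/monicP; move/monicP: M_monic; rewrite ME lead_coefM (monicP P_monic) mul1r.
have [g1 | gn1] := boolP (size g == 1%N); first by rewrite ME (monic_size1 g_monic g1) mulr1.
have : ~~ coprimep g P by apply: coP gn1; rewrite ME dvdp_mull.
rewrite coprimep_def => /negPf ncop.
have : gcdp g P * gcdp g P %| M by rewrite ME mulrC dvdp_mul ?dvdp_gcdl ?dvdp_gcdr.
by move/sqM; rewrite ncop.
Qed.

Lemma irreducible_divisor (R : idomainType) (g : {poly R}) :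
  (1 < size g)%N -> exists2 r, irreducible_poly r & r %| g.
Proof.
elim/ltn_ind: (size g) {-2}g (erefl (size g)) => k IH {}g gk g_gt1.
have [[q [qn1 qg nqg]] | no_proper] := classic
  (exists q : {poly R}, [/\ size q != 1%N, q %| g & ~~ (q %= g)]); last first.
  exists g => //; split=> // q qn1 qg; apply/negPn/negP => nqg.
  by apply: no_proper; exists q.
have g_neq0 : g != 0 by rewrite -size_poly_gt0 (ltn_trans _ g_gt1).
have q_neq0 : q != 0 by apply: contraNneq g_neq0 => q0; move: qg; rewrite q0 dvd0p.
have [r r_irr rq] : exists2 r, irreducible_poly r & r %| q.
  apply: (IH (size q)) => //; first by rewrite -gk ltn_neqAle dvdp_leq // andbT dvdp_size_eqp.
  by rewrite ltn_neqAle eq_sym qn1 size_poly_gt0.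
by exists r => //; exact: dvdp_trans rq qg.
Qed.

Lemma eqp_irreducible (R : idomainType) (r r' : {poly R}) :
  irreducible_poly r -> r' %= r -> irreducible_poly r'.
Proof.
move=> r_irr rr'; split; first by rewrite (eqp_size rr'); case: r_irr.
move=> q qn1 qr'; have qr : q %| r by rewrite -(eqp_dvdr _ rr').
by apply: eqp_trans (r_irr q qn1 qr) _; rewrite eqp_sym.
Qed.

Section ProdCoprime.
Variables (R : idomainType) (T : eqType).
Implicit Types (p : {poly R}) (s : seq T) (G : T -> {poly R}).

Lemma dvdp_prod_mem s G x : x \in s -> G x %| \prod_(y <- s) G y.
Proof. by move=> xs; rewrite (big_rem x xs) /= dvdp_mulIl. Qed.

Lemma coprimep_prodr p s G :
  coprimep p (\prod_(x <- s) G x) <-> (forall x, x \in s -> coprimep p (G x)).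
Proof.
split=> [cop x xs|]; first exact: coprimep_dvdl (dvdp_prod_mem G xs) cop.
elim: s => [|x s IH] cop; first by rewrite big_nil coprimep1.
rewrite big_cons coprimepMr cop ?mem_head //= IH // => y ys.
by rewrite cop // in_cons ys orbT.
Qed.

Lemma prod_coprime_dvdp p s G :
  uniq s -> (forall x, x \in s -> G x %| p) ->
  {in s &, forall x y, x != y -> coprimep (G x) (G y)} ->
  \prod_(x <- s) G x %| p.
Proof.
elim: s => [|x s IH] /=; first by rewrite big_nil dvd1p.
case/andP => xs us dvdG copG; rewrite big_cons Gauss_dvdp.
  rewrite dvdG ?mem_head //= IH // => [y ys|y z ys zs]; first by rewrite dvdG // in_cons ys orbT.
  by apply: copG; rewrite in_cons ?ys ?zs orbT.
apply/coprimep_prodr => y ys; apply: copG; rewrite ?mem_head ?in_cons ?ys ?orbT //.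
by apply: contraNneq xs => ->.
Qed.

End ProdCoprime.

Lemma common_divisor_not_coprimep (R : idomainType) (r p q : {poly R}) :
  r %| p -> r %| q -> size r != 1%N -> ~~ coprimep p q.
Proof.
move=> rp rq rn1; apply: contra rn1 => cop.
by rewrite -coprimepp (coprimep_dvdl rq) // (coprimep_dvdr rp).
Qed.

Lemma eq_of_prod_divisors (R : idomainType) (a b : nat -> R) :
  (forall n, (0 < n)%N -> \prod_(d <- divisors n) a d = \prod_(d <- divisors n) b d) ->
  (forall n, (0 < n)%N -> b n != 0) ->
  forall n, (0 < n)%N -> a n = b n.
Proof.
move=> prod_ab b_neq0; elim/ltn_ind=> n IH n_gt0.
have divisor_gt0 d : d \in divisors n -> (0 < d)%N.
  by rewrite -dvdn_divisors // => /dvdn_gt0; apply.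
have := prod_ab n n_gt0; rewrite !(bigD1_seq n) ?divisors_id ?divisors_uniq //=.
have -> : \prod_(d <- divisors n | d != n) a d = \prod_(d <- divisors n | d != n) b d.
  rewrite big_seq_cond [RHS]big_seq_cond; apply: eq_bigr => d /andP[dD dn].
  apply: IH (divisor_gt0 d dD); rewrite ltn_neqAle dn dvdn_leq //.
  by rewrite dvdn_divisors.
apply: mulIf; rewrite prodf_seq_neq0; apply/allP => d dD.
by rewrite b_neq0 ?implybT ?divisor_gt0.
Qed.

(* The exponential of the von Mangoldt function: p on powers p^a (a > 0) of a
   prime p, and 1 elsewhere. *)
Definition mangoldt_exp (e : nat) : nat := if primes e is [:: p] then p else 1%N.

Lemma mangoldt_exp_pow p a : prime p -> (0 < a)%N -> mangoldt_exp (p ^ a)%N = p.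
Proof. by move=> p_pr a_gt0; rewrite /mangoldt_exp primesX // primes_prime. Qed.

Lemma mangoldt_exp_gt0 e : (0 < mangoldt_exp e)%N.
Proof.
rewrite /mangoldt_exp; case pe: (primes e) => [|p [|]] //.
by have := mem_primes p e; rewrite pe mem_head => /esym/and3P[/prime_gt0].
Qed.

Lemma mangoldt_expP e : (0 < e)%N ->
  (exists p a, [/\ prime p, (0 < a)%N & e = (p ^ a)%N]) \/ mangoldt_exp e = 1%N.
Proof.
rewrite /mangoldt_exp => e_gt0; case pe: (primes e) => [|p [|]]; [by right | left | by right].
have p_pr : prime p by have := mem_primes p e; rewrite pe mem_head => /esym/and3P[].
exists p, (logn p e); split=> //; first by rewrite logn_gt0 pe mem_head.
by rewrite {1}(prod_prime_decomp e_gt0) prime_decompE pe big_seq1.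
Qed.

Lemma mangoldt_exp_new_divisor p m e : prime p -> (0 < m)%N ->
  (e %| m * p)%N -> ~~ (e %| m)%N -> e != (p ^ (logn p m).+1)%N -> mangoldt_exp e = 1%N.
Proof.
move=> p_pr m_gt0 e_mp e_m e_new.
have e_gt0 : (0 < e)%N by apply: dvdn_gt0 e_mp; rewrite muln_gt0 m_gt0 prime_gt0.
case: (mangoldt_expP e_gt0) => // -[r [a [r_pr a_gt0 eE]]]; exfalso.
have [rp | rnp] := eqVneq r p.
  move: e_mp e_m e_new; rewrite eE rp !pfactor_dvdn ?muln_gt0 ?m_gt0 ?prime_gt0 //.
  rewrite (lognM _ m_gt0 (prime_gt0 p_pr)) (logn_prime p p_pr) eqxx addn1 -ltnNge => a_le a_gt.
  have -> : a = (logn p m).+1 by lia.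
  by rewrite eqxx.
have : coprime e p by rewrite eE; apply: coprimeXl; rewrite prime_coprime // dvdn_prime2.
by move/Gauss_dvdl => e_mpE; rewrite e_mpE in e_mp; rewrite e_mp in e_m.
Qed.

(* The multiplicative form of \sum_(e | m) Lambda(e) = log m, by induction:
   with p the least prime factor of m = m' p, the divisors of m not dividing
   m' contribute only p, through p^(v_p(m') + 1). *)
Lemma prod_mangoldt_exp m : (0 < m)%N -> (\prod_(e <- divisors m) mangoldt_exp e)%N = m.
Proof.
elim/ltn_ind: m => m IH m_gt0; have [m_le1 | m_gt1] := leqP m 1.
  have -> : m = 1%N by apply/eqP; rewrite eqn_leq m_le1.
  by rewrite (_ : divisors 1 = [:: 1%N]) // big_seq1.
set p := pdiv m; have p_pr : prime p by exact: pdiv_prime.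
set m' := (m %/ p)%N; have mE : m = (m' * p)%N by rewrite divnK ?pdiv_dvd.
have m'_gt0 : (0 < m')%N by rewrite divn_gt0 ?prime_gt0 // dvdn_leq ?pdiv_dvd.
have m'_dvd : (m' %| m)%N by rewrite [in X in (_ %| X)%N]mE dvdn_mulr.
rewrite (bigID (fun e => (e %| m')%N)) /=.
have -> : (\prod_(e <- divisors m | (e %| m')%N) mangoldt_exp e = m')%N.
  rewrite -big_filter -{2}(IH m' _ m'_gt0) ?ltn_Pdiv ?prime_gt1 //.
  apply: perm_big; apply: uniq_perm; rewrite ?filter_uniq ?divisors_uniq // => e.
  rewrite mem_filter -!dvdn_divisors //.
  by apply/andP/idP => [[]//|e_m']; split=> //; exact: dvdn_trans m'_dvd.
set q := (p ^ (logn p m').+1)%N.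
have q_new : ~~ (q %| m')%N by rewrite pfactor_dvdn // ltnn.
have q_m : (q %| m)%N by rewrite mE /q expnSr dvdn_mul ?pfactor_dvdnn.
have qD : q \in [seq e <- divisors m | ~~ (e %| m')%N].
  by rewrite mem_filter q_new -dvdn_divisors.
rewrite -big_filter (bigD1_seq q qD) ?filter_uniq ?divisors_uniq //=.
rewrite mangoldt_exp_pow // big1_seq ?muln1 -?mE // => e /andP[e_q].
rewrite mem_filter -dvdn_divisors // mE => /andP[e_m' e_m].
exact: mangoldt_exp_new_divisor e_m e_m' e_q.
Qed.

Local Notation F := fib_poly.

Lemma fib_polySS n : F n.+2 = 'X * F n.+1 + F n.
Proof. by []. Qed.

(* F_(n+1) is monic of degree n; proved for two consecutive indices at once,
   since the recurrence looks two steps back. *)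
Lemma fib_poly_size_monic2 n :
  (size (F n.+1) = n.+1 /\ F n.+1 \is monic) /\
  (size (F n.+2) = n.+2 /\ F n.+2 \is monic).
Proof.
elim: n => [|n [[s0 _] [s1 m1]]].
  by rewrite /= mulr1 addr0 size_poly1 monic1 size_polyX monicX.
have sizeXF : size ('X * F n.+2) = n.+3 by rewrite mulrC size_mulX ?s1 ?monic_neq0.
have ltF : (size (F n.+1) < size ('X * F n.+2)%R)%N by rewrite sizeXF s0.
split=> //; rewrite fib_polySS size_polyDl // sizeXF; split=> //.
by apply/monicP; rewrite lead_coefDl // mulrC lead_coefMX; apply/monicP.
Qed.

Lemma fib_poly_monic n : (0 < n)%N -> F n \is monic.
Proof. by case: n => // n _; case: (fib_poly_size_monic2 n) => -[]. Qed.

Lemma fib_poly_neq0 n : (0 < n)%N -> F n != 0.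
Proof. by move/fib_poly_monic/monic_neq0. Qed.

Lemma coprimep_fib_polyS n : coprimep (F n) (F n.+1).
Proof.
elim: n => [|n IH]; first by rewrite coprimep_sym /= coprimep0 eqpxx.
by rewrite fib_polySS coprimep_addl_mul coprimep_sym.
Qed.

Lemma fib_polyD m n : F (m + n.+1) = F m.+1 * F n.+1 + F m * F n.
Proof.
elim/ltn_ind: n => -[|[|n]] IH; first by rewrite addn1 /= mulr1 mulr0 addr0.
  by rewrite addn2 fib_polySS /=; ring.
have -> : (m + n.+3 = (m + n.+1).+2)%N by rewrite !addnS.
rewrite fib_polySS -addnS !IH // !fib_polySS; ring.
Qed.

Lemma gcdp_fib_polyD m c : gcdp (F (m + c.+1)) (F c.+1) %= gcdp (F m) (F c.+1).
Proof.
rewrite fib_polyD.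
apply: eqp_trans (gcdpC _ _) _; apply: eqp_trans (gcdp_addl_mul _ _ _) _.
apply: eqp_trans (Gauss_gcdpl _ _) (gcdpC _ _).
by rewrite coprimep_sym coprimep_fib_polyS.
Qed.

Lemma gcdp_fib_poly a b : gcdp (F a) (F b) %= F (gcdn a b).
Proof.
elim/ltn_ind: (a + b)%N {-2}a {-2}b (erefl (a + b)%N) => k IH {}a {}b abk.
wlog ba : a b abk / (b <= a)%N.
  move=> Hwlog; case: (leqP b a) => [|/ltnW]; first exact: Hwlog.
  by move/(Hwlog b a); rewrite addnC gcdnC => H; apply: eqp_trans (gcdpC _ _) (H abk).
case: b abk ba => [|c] abk ba; first by rewrite gcdp0 gcdn0 eqpxx.
rewrite -(subnK ba); apply: eqp_trans (gcdp_fib_polyD _ _) _.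
rewrite gcdnC gcdnDr gcdnC; apply: IH (erefl _); lia.
Qed.

Lemma fib_poly_dvdp d n : (d %| n)%N -> F d %| F n.
Proof.
move=> /gcdn_idPl dn; have := gcdp_fib_poly d n; rewrite dn => /eqp_dvdl <-.
exact: dvdp_gcdr.
Qed.

Lemma dvdp_fib_poly_gcdn r a b : r %| F a -> r %| F b -> r %| F (gcdn a b).
Proof. by move=> ra rb; rewrite -(eqp_dvdr _ (gcdp_fib_poly a b)) dvdp_gcd ra. Qed.

Lemma fib_poly_deriv2 n :
  (('X^2 + 4) * (F n.+1)^`() + 'X * F n.+1 = n.+1%:R * (F n.+2 + F n)) /\
  (('X^2 + 4) * (F n.+2)^`() + 'X * F n.+2 = n.+2%:R * (F n.+3 + F n.+1)).
Proof.
elim: n => [|n [IH0 IH1]]; first by rewrite /= !derivE; split; ring.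
split=> //; apply/eqP; rewrite -subr_eq0; apply/eqP.
have -> : ('X^2 + 4) * (F n.+3)^`() + 'X * F n.+3 - n.+3%:R * (F n.+4 + F n.+2)
   = 'X * (('X^2 + 4) * (F n.+2)^`() + 'X * F n.+2 - n.+2%:R * (F n.+3 + F n.+1))
     + (('X^2 + 4) * (F n.+1)^`() + 'X * F n.+1 - n.+1%:R * (F n.+2 + F n)).
  by rewrite [F n.+4]fib_polySS [F n.+3]fib_polySS [F n.+2]fib_polySS !derivE; ring.
by rewrite IH0 IH1 !subrr; ring.
Qed.

(* F_n is squarefree: a repeated factor r would divide F_n, F_n' and hence,
   by the differential identity, F_(n+1) + F_(n-1); together with
   F_(n+1) - F_(n-1) = X F_n it would divide 2 F_(n+1), which is coprime to F_n. *)
Lemma fib_poly_squarefree n : (0 < n)%N -> squarefree_poly (F n).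
Proof.
case: n => // m _ r rrF.
have rF : r %| F m.+1 by apply: dvdp_trans rrF; exact: dvdp_mulIl.
have rF' : r %| (F m.+1)^`() by exact: dvdp_deriv_of_sq.
have rSum : r %| F m.+2 + F m.
  rewrite -(@dvdp_mulrn _ r _ m.+1) // -mulr_natl.
  by case: (fib_poly_deriv2 m) => <- _; rewrite dvdp_add ?dvdp_mull.
have rDiff : r %| F m.+2 - F m.
  have -> : F m.+2 - F m = 'X * F m.+1 by rewrite fib_polySS; ring.
  exact: dvdp_mull.
have rFS : r %| F m.+2.
  rewrite -(@dvdp_mulrn _ r _ 2) //.
  have -> : F m.+2 *+ 2 = (F m.+2 + F m) + (F m.+2 - F m) by ring.
  exact: dvdp_add.
have := coprimep_fib_polyS m.+1.
by move/(coprimep_dvdl rFS)/(coprimep_dvdr rF); rewrite coprimepp.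
Qed.

Definition prev_fib_prod (n : nat) : {poly int} := \prod_(1 <= k < n) F k.

Lemma coprimep_prev_fib_prod p n :
  coprimep p (prev_fib_prod n) <-> (forall k, (1 <= k < n)%N -> coprimep p (F k)).
Proof.
rewrite /prev_fib_prod coprimep_prodr.
by split=> cop k; [rewrite -mem_index_iota; exact: cop | rewrite mem_index_iota; exact: cop].
Qed.

Definition fibotomic (n : nat) : {poly int} :=
  monic_assoc (gdcop (prev_fib_prod n) (F n)).

Section Fibotomic.
Variable n : nat.
Hypothesis n_gt0 : (0 < n)%N.

Lemma fibotomic_spec :
  fibotomic n \is monic /\ fibotomic n %= gdcop (prev_fib_prod n) (F n).
Proof. exact: monic_assoc_spec (fib_poly_monic n_gt0) (dvdp_gdco _ _). Qed.

Lemma fibotomic_monic : fibotomic n \is monic.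
Proof. by case: fibotomic_spec. Qed.

Lemma fibotomic_dvdp : fibotomic n %| F n.
Proof. by case: fibotomic_spec => _ /eqp_dvdl ->; exact: dvdp_gdco. Qed.

Lemma fibotomic_squarefree : squarefree_poly (fibotomic n).
Proof. exact: squarefree_dvdp (fib_poly_squarefree n_gt0) fibotomic_dvdp. Qed.

Lemma coprimep_fibotomic k : (1 <= k < n)%N -> coprimep (fibotomic n) (F k).
Proof.
case: fibotomic_spec => _ /eqp_coprimepl ->; move: k; apply/coprimep_prev_fib_prod.
exact/coprimep_gdco/fib_poly_neq0.
Qed.

Lemma fibotomic_max d :
  d %| F n -> (forall k, (1 <= k < n)%N -> coprimep d (F k)) -> d %| fibotomic n.
Proof.
move=> dF /coprimep_prev_fib_prod dcop; case: fibotomic_spec => _ /eqp_dvdr ->.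
by case: gdcopP => r _ _; apply.
Qed.

End Fibotomic.

(* Distinct Psi_d are coprime, since Psi_d divides F_d. *)
Lemma coprimep_fibotomic_neq d e :
  (0 < d)%N -> (0 < e)%N -> d != e -> coprimep (fibotomic d) (fibotomic e).
Proof.
wlog de : d e / (d < e)%N.
  move=> Hwlog d_gt0 e_gt0 de_neq; case: (ltngtP d e) => [de|ed|deq]; first exact: Hwlog.
  - by rewrite coprimep_sym Hwlog // eq_sym.
  - by rewrite deq eqxx in de_neq.
move=> d_gt0 e_gt0 _; rewrite coprimep_sym.
apply: coprimep_dvdl (fibotomic_dvdp d_gt0) _.
by apply: coprimep_fibotomic; rewrite // d_gt0.
Qed.

(* A nonconstant divisor g of F_n meets some Psi_e with e | n: take the least
   e such that g is not coprime to F_e; then e | n by strong divisibility and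
   gcd(g, F_e) divides Psi_e by maximality. *)
Lemma fib_poly_divisor_meets_fibotomic n g :
  (0 < n)%N -> g %| F n -> size g != 1%N ->
  exists2 e, (e %| n)%N & ~~ coprimep g (fibotomic e).
Proof.
move=> n_gt0 gF gn1.
have ex_e : exists e, (0 < e)%N && ~~ coprimep g (F e).
  by exists n; rewrite n_gt0 /= (common_divisor_not_coprimep (dvdpp g) gF).
case: (ex_minnP ex_e) => e /andP[e_gt0 ncop_e] e_min.
set r := gcdp g (F e).
have rn1 : size r != 1%N by rewrite -coprimep_def.
have ncop_r k : r %| F k -> ~~ coprimep g (F k).
  by move=> rk; apply: common_divisor_not_coprimep rk rn1; exact: dvdp_gcdl.
have en : (e %| n)%N.
  have gcd_gt0 : (0 < gcdn e n)%N by rewrite gcdn_gt0 e_gt0.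
  have e_le : (e <= gcdn e n)%N.
    apply: e_min; rewrite gcd_gt0 ncop_r // dvdp_fib_poly_gcdn ?dvdp_gcdr //.
    exact: dvdp_trans (dvdp_gcdl _ _) gF.
  by apply/gcdn_idPl/eqP; rewrite eqn_leq dvdn_leq ?dvdn_gcdl.
have r_psi : r %| fibotomic e.
  apply: (fibotomic_max e_gt0 (dvdp_gcdr _ _)) => k /andP[k_gt0 ke].
  have : ~~ ((0 < k)%N && ~~ coprimep g (F k)) by apply/negP => /e_min; rewrite leqNgt ke.
  by rewrite k_gt0 negbK; apply: coprimep_dvdr; exact: dvdp_gcdl.
by exists e => //; exact: common_divisor_not_coprimep (dvdp_gcdl _ _) r_psi rn1.
Qed.

Lemma fib_poly_prod_fibotomic n :
  (0 < n)%N -> F n = \prod_(d <- divisors n) fibotomic d.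
Proof.
move=> n_gt0; have divisor_gt0 d : d \in divisors n -> (0 < d)%N.
  by rewrite -dvdn_divisors // => /dvdn_gt0; apply.
apply/esym/monic_dvdp_squarefree_eq; rewrite ?fib_poly_monic //.
- by rewrite big_seq; apply: monic_prod => d /divisor_gt0 /fibotomic_monic.
- exact: fib_poly_squarefree.
- apply: prod_coprime_dvdp; first exact: divisors_uniq.
    move=> d dD; apply: dvdp_trans (fibotomic_dvdp (divisor_gt0 d dD)) _.
    by apply: fib_poly_dvdp; rewrite dvdn_divisors.
  by move=> d e dD eD; apply: coprimep_fibotomic_neq; exact: divisor_gt0.
- move=> g gF gn1; have [e en ncop] := fib_poly_divisor_meets_fibotomic n_gt0 gF gn1.
  apply: contra ncop => /coprimep_prodr; apply; by rewrite -dvdn_divisors.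
Qed.

Lemma fibotomic1 : fibotomic 1 = 1.
Proof.
have := @fib_poly_prod_fibotomic 1 erefl.
by rewrite (_ : divisors 1 = [:: 1%N]) // big_seq1.
Qed.

Lemma fibotomic2 : fibotomic 2 = 'X.
Proof.
have := @fib_poly_prod_fibotomic 2 erefl; rewrite (_ : divisors 2 = [:: 1%N; 2%N]) //.
by rewrite big_cons big_seq1 fibotomic1 mul1r /= mulr1 addr0.
Qed.

Lemma new_factor_coprimep n q q' :
  new_factor n q -> new_factor n q' -> q != q' -> coprimep q q'.
Proof.
move=> [q_monic q_irr _ _] [q'_monic q'_irr _ _] qq'.
rewrite irreducible_poly_coprime //; apply: contra qq' => qq'_dvd.
rewrite -eqp_monic //; apply: q'_irr qq'_dvd.
by case: q_irr => q_gt1 _; rewrite neq_ltn q_gt1 orbT.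
Qed.

(* Any enumeration of the new irreducible factors of F_n multiplies to Psi_n:
   their product divides Psi_n by maximality, and a nonconstant cofactor would
   contain a new irreducible factor, hence a square factor of F_n. *)
Lemma fibotomic_factors_prod n s :
  (0 < n)%N -> fibotomic_factors n s -> \prod_(q <- s) q = fibotomic n.
Proof.
move=> n_gt0 [s_uniq s_new].
apply: monic_dvdp_squarefree_eq; rewrite ?fibotomic_monic //.
- by rewrite big_seq; apply: monic_prod => q /s_new [].
- exact: fibotomic_squarefree.
- apply: (fibotomic_max n_gt0) => [|k kn].
    apply: prod_coprime_dvdp => // [q /s_new [] //|q q' /s_new qs /s_new q's].
    exact: (new_factor_coprimep qs q's).
  rewrite coprimep_sym; apply/coprimep_prodr => q /s_new [_ q_irr _ q_new].
  by rewrite coprimep_sym irreducible_poly_coprime // q_new.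
move=> g g_psi gn1; have g_gt1 : (1 < size g)%N.
  rewrite ltn_neqAle eq_sym gn1 size_poly_gt0; apply: contraTneq g_psi => ->.
  by rewrite dvd0p monic_neq0 ?fibotomic_monic.
have [r r_irr rg] := irreducible_divisor g_gt1.
have rF : r %| F n by apply: dvdp_trans rg (dvdp_trans g_psi (fibotomic_dvdp n_gt0)).
have [r'_monic r'r] := monic_assoc_spec (fib_poly_monic n_gt0) rF.
set r' := monic_assoc r in r'_monic r'r.
have r'_irr : irreducible_poly r' by exact: eqp_irreducible r_irr r'r.
have r'n1 : size r' != 1%N by case: r'_irr => /gtn_eqF ->.
have r'_psi : r' %| fibotomic n by rewrite (eqp_dvdl _ r'r) (dvdp_trans rg).
have r's : r' \in s.
  apply/s_new; split=> //; first exact: dvdp_trans r'_psi (fibotomic_dvdp n_gt0).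
  move=> k kn; apply: contraL (coprimep_fibotomic n_gt0 kn) => r'F.
  exact: common_divisor_not_coprimep r'_psi r'F r'n1.
apply: common_divisor_not_coprimep (dvdp_prod_mem id r's) r'n1.
by rewrite (eqp_dvdl _ r'r).
Qed.


(* The lowest nonzero coefficient of F_n: F_n(0) = 1 for odd n, while for even
   n the coefficient of X is n/2. *)
Definition fib_low_coef (n : nat) : nat := if odd n then 1%N else n./2.

(* The claimed value of Psi_d(0) for d <> 2. *)
Definition psi0_nat (d : nat) : nat := if odd d then 1%N else mangoldt_exp d./2.

Lemma psi0_nat_gt0 d : (0 < psi0_nat d)%N.
Proof. by rewrite /psi0_nat; case: odd; rewrite ?mangoldt_exp_gt0. Qed.

(* The even divisors of 2m are the doubles of the divisors of m. *)
Lemma prod_psi0_nat_double m :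
  (0 < m)%N -> (\prod_(d <- divisors m.*2) psi0_nat d)%N = m.
Proof.
move=> m_gt0; have m2_gt0 : (0 < m.*2)%N by rewrite double_gt0.
rewrite (bigID odd) /= big1 ?mul1n => [|d d_odd]; last by rewrite /psi0_nat d_odd.
rewrite -big_filter -{2}(prod_mangoldt_exp m_gt0).
rewrite (perm_big (map double (divisors m))).
  by rewrite big_map; apply: eq_bigr => d _; rewrite /psi0_nat odd_double doubleK.
apply: uniq_perm; first by rewrite filter_uniq ?divisors_uniq.
  by rewrite map_inj_uniq ?divisors_uniq //; exact: double_inj.
move=> d; rewrite mem_filter -dvdn_divisors //; apply/andP/mapP => [[d_even dm2]|[e]].
  have dE : d = d./2.*2 by have := odd_double_half d; rewrite (negPf d_even).
  by exists d./2; rewrite // -dvdn_divisors // -(@dvdn_pmul2r 2) // !muln2 -dE.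
rewrite -dvdn_divisors // => em ->; rewrite odd_double; split=> //.
by rewrite -!muln2 dvdn_pmul2r.
Qed.

Lemma prod_psi0_nat n : (0 < n)%N -> (\prod_(d <- divisors n) psi0_nat d)%N = fib_low_coef n.
Proof.
rewrite /fib_low_coef => n_gt0; case n_odd: (odd n); last first.
  have nE : n = n./2.*2 by have := odd_double_half n; rewrite n_odd.
  by rewrite {1}nE prod_psi0_nat_double // -double_gt0 -nE.
rewrite big_seq big1 // => d; rewrite -dvdn_divisors // => dn.
by rewrite /psi0_nat (dvdn_odd dn n_odd).
Qed.

Lemma fib_poly_at0 m :
  (exists2 h, F m.*2 = 'X * h & h.[0] = m%:R) /\ (F m.*2.+1).[0] = 1.
Proof.
elim: m => [|m [[h hE h0] F_odd0]].
  by split; [exists 0; rewrite ?mulr0 ?horner0 | rewrite /= hornerC].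
have F_evenE : F m.+1.*2 = 'X * (F m.*2.+1 + h) by rewrite doubleS fib_polySS hE mulrDr.
split; first by exists (F m.*2.+1 + h); rewrite // hornerD F_odd0 h0 -natr1 addrC.
by rewrite doubleS fib_polySS F_evenE !hornerE F_odd0; ring.
Qed.

(* Evaluating the factorization at 0, with the vanishing factor Psi_2 = X
   replaced by 1, gives the lowest coefficient of F_n. *)
Lemma prod_fibotomic_at0 n : (0 < n)%N ->
  \prod_(d <- divisors n) (if d == 2%N then 1 else (fibotomic d).[0]) = (fib_low_coef n)%:R.
Proof.
rewrite /fib_low_coef => n_gt0; have F_prod := fib_poly_prod_fibotomic n_gt0.
have [[h hE h0] F_odd0] := fib_poly_at0 n./2.
case n_odd: (odd n).
  have nE : n = n./2.*2.+1 by have := odd_double_half n; rewrite n_odd add1n.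
  transitivity (F n).[0]; last by rewrite {1}nE F_odd0.
  rewrite F_prod horner_prod big_seq [RHS]big_seq; apply: eq_bigr => d dD.
  suff /negPf -> : d != 2%N by [].
  by apply: contraTneq dD => ->; rewrite -dvdn_divisors // dvdn2 n_odd.
have nE : n = n./2.*2 by have := odd_double_half n; rewrite n_odd.
have twoD : 2%N \in divisors n by rewrite -dvdn_divisors // dvdn2 n_odd.
rewrite (bigD1_seq 2%N) ?divisors_uniq //= mul1r -h0.
have -> : h = \prod_(d <- divisors n | d != 2%N) fibotomic d.
  apply: (@mulfI _ 'X); first by rewrite polyX_eq0.
  by rewrite -hE -nE F_prod (bigD1_seq 2%N) ?divisors_uniq //= fibotomic2.
by rewrite horner_prod; apply: eq_bigr => d /negPf ->.
Qed.

(* Psi_d(0) for d <> 2, by the multiplicative uniqueness of divisor products. *)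
Lemma fibotomic_at0 d : (0 < d)%N -> d != 2%N -> (fibotomic d).[0] = (psi0_nat d)%:R.
Proof.
move=> d_gt0 d_neq2.
have := @eq_of_prod_divisors _ (fun d => if d == 2%N then 1 else (fibotomic d).[0])
  (fun d => (psi0_nat d)%:R) _ _ d d_gt0; rewrite /= (negPf d_neq2); apply.
  by move=> n n_gt0; rewrite prod_fibotomic_at0 // -natr_prod prod_psi0_nat.
by move=> n _; rewrite pnatr_eq0 -lt0n psi0_nat_gt0.
Qed.

Theorem mainTheorem5 (n : nat) (s : seq {poly int}) :
  (0 < n)%N -> fibotomic_factors n s ->
  let v := (\prod_(q <- s) q).[0] in
  [/\ (n = 2%N -> v = 0),
      (forall (p a : nat), prime p -> (0 < a)%N -> n = (2 * p ^ a)%N ->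
         v = p%:Z)
    & (n <> 2%N ->
       (~ exists p a : nat, [/\ prime p, (0 < a)%N & n = (2 * p ^ a)%N]) ->
       v = 1)].
Proof.
move=> n_gt0 s_fact v; have vE : v = (fibotomic n).[0].
  by rewrite /v (fibotomic_factors_prod n_gt0 s_fact).
split=> [n2 | p a p_pr a_gt0 nE | /eqP n_neq2 no_pp].
- by rewrite vE n2 fibotomic2 hornerX.
- have pa_gt1 : (1 < p ^ a)%N by rewrite -(expn0 p) ltn_exp2l ?prime_gt1.
  rewrite vE fibotomic_at0 //; last by rewrite nE; lia.
  by rewrite /psi0_nat nE mul2n odd_double doubleK mangoldt_exp_pow // natz.
rewrite vE fibotomic_at0 // /psi0_nat; case n_odd: (odd n) => //.
have nE : n = n./2.*2 by have := odd_double_half n; rewrite n_odd.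
have half_gt0 : (0 < n./2)%N by rewrite -double_gt0 -nE.
have [[p [a [p_pr a_gt0 n2E]]] | -> //] := mangoldt_expP half_gt0.
by case: no_pp; exists p, a; rewrite nE n2E mul2n.
Qed.
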